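(* Let $\mathfrak g$ be a nonsemisimple complex Lie algebra, $\mathfrak p$ a nonperfect ideal of $\mathfrak g$, and $\phi:\mathfrak p\to\mathbb C$ a Lie algebra homomorphism. Then $\phi$ is extendable if and only if $[\mathfrak g^{\phi},\mathfrak g^{\phi}]\cap\mathfrak p\subseteq\ker\phi$.
   Context: A Lie algebra homomorphism to $\mathbb C$ is a linear map vanishing on the derived subalgebra. The Whittaker annihilator is $\mathfrak g^{\phi}=\{g\in\mathfrak g:\phi([g,p])=0\ \forall p\in\mathfrak p\}$, a subalgebra of $\mathfrak g$ containing $\mathfrak p$. $\phi$ is called extendable if there exists a Lie algebra homomorphism $\phi':\mathfrak g^\phi\to\mathbb C$ with $\phi'|_{\mathfrak p}=\phi$. *)

From HB Require Import structures.
From mathcomp Require Import all_boot all_order all_algebra.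
From mathcomp Require Import complex.
From mathcomp Require Import Rstruct.
Set Implicit Arguments. Unset Strict Implicit. Unset Printing Implicit Defensive.
Import Order.TTheory GRing.Theory Num.Theory.
Local Open Scope ring_scope.

Definition CC : fieldType := complex Rdefinitions.R.

Section Lie.
Variable V : vectType CC.
Variable br : V -> V -> V.

Definition lie_algebra : Prop :=
  [/\ (forall a x y z, br (a *: x + y) z = a *: br x z + br y z),
      (forall a x y z, br z (a *: x + y) = a *: br z x + br z y),
      (forall x, br x x = 0) &
      (forall x y z, br x (br y z) + br y (br z x) + br z (br x y) = 0)].

Definition in_bracket (A B : V -> Prop) (v : V) : Prop :=
  exists s : seq (CC * V * V),
    (forall t, t \in s -> A t.1.2 /\ B t.2) /\
    v = \sum_(t <- s) t.1.1 *: br t.1.2 t.2.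

Definition is_ideal (I : {vspace V}) : Prop :=
  forall g x, x \in I -> br g x \in I.

Fixpoint derived (I : {vspace V}) (k : nat) : V -> Prop :=
  match k with
  | 0 => fun v => v \in I
  | k'.+1 => in_bracket (derived I k') (derived I k')
  end.

Definition solvable_ideal (I : {vspace V}) : Prop :=
  exists k, forall v, derived I k v -> v = 0.

Definition semisimple : Prop :=
  forall I : {vspace V}, is_ideal I -> solvable_ideal I -> I = 0%VS.

Definition perfect (P : {vspace V}) : Prop :=
  forall v, v \in P <-> in_bracket (fun x => x \in P) (fun x => x \in P) v.

(* a Lie algebra homomorphism D -> C, D a subalgebra given as a predicate:
   a linear map on D vanishing on the brackets of elements of D
   (values of f outside D are irrelevant) *)
Definition lie_hom_on (D : V -> Prop) (f : V -> CC) : Prop :=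
  (forall a x y, D x -> D y -> f (a *: x + y) = a * f x + f y) /\
  (forall x y, D x -> D y -> f (br x y) = 0).

Definition whittaker_ann (P : {vspace V}) (phi : V -> CC) (g : V) : Prop :=
  forall p, p \in P -> phi (br g p) = 0.

Definition extendable (P : {vspace V}) (phi : V -> CC) : Prop :=
  exists phi' : V -> CC,
    lie_hom_on (whittaker_ann P phi) phi' /\
    (forall x, x \in P -> phi' x = phi x).

End Lie.

From mathcomp Require Import all_boot all_algebra.
From Stdlib Require Import Classical.
Set Implicit Arguments. Unset Strict Implicit. Unset Printing Implicit Defensive.
Import GRing.Theory.
Local Open Scope ring_scope.

(* The Whittaker annihilator g^phi is a subalgebra of g (Jacobi identity, p
   being an ideal).  If phi' extends phi, then as a Lie homomorphism on g^phi
   it kills [g^phi, g^phi], so phi = phi' kills [g^phi, g^phi] ∩ p.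
   Conversely, if phi kills [g^phi, g^phi] ∩ p, composing phi with a
   projection onto p along [g^phi, g^phi] gives a linear form on g that agrees
   with phi on p and kills [g^phi, g^phi]; it is therefore a Lie homomorphism
   on g^phi. *)

Section LinearAlgebra.
Variable V : vectType CC.

Definition subspace_pred (S : V -> Prop) : Prop :=
  S 0 /\ forall a x y, S x -> S y -> S (a *: x + y).

Definition lin_on (D : V -> Prop) (f : V -> CC) : Prop :=
  forall a x y, D x -> D y -> f (a *: x + y) = a * f x + f y.

Lemma dimv_add_line (U : {vspace V}) x :
  x \notin U -> (\dim U < \dim (U + <[x]>))%N.
Proof. by rewrite (ltn_leqif (dimv_leqif_sup (addvSl U _))) subv_add subvv -memvE. Qed.

Lemma vspace_of_pred (S : V -> Prop) :
  subspace_pred S -> exists U : {vspace V}, forall x, x \in U <-> S x.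
Proof.
move=> [S0 S_lin].
suff grow n (U : {vspace V}) : (\dim {:V} - \dim U)%N = n ->
    (forall x, x \in U -> S x) -> exists U' : {vspace V}, forall x, x \in U' <-> S x.
  by apply: (grow _ 0%VS erefl) => x; rewrite memv0 => /eqP ->.
elim/ltn_ind: n U => n IH U def_n US.
have [[x [Sx xU]] | noS] := classic (exists x, S x /\ x \notin U); last first.
  exists U => x; split=> [|Sx]; first exact: US.
  by apply/negPn/negP => xU; apply: noS; exists x.
have /dimv_add_line ltUx := xU.
apply: (IH _ _ (U + <[x]>)%VS erefl).
  have leUx : (\dim (U + <[x]>) <= \dim {:V})%N by apply/dimvS/subvf.
  by rewrite -def_n ltn_sub2l // (leq_trans ltUx leUx).
move=> v /memv_addP [u uU [w /vlineP [c ->] ->]].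
by rewrite addrC; apply: S_lin => //; apply: US.
Qed.

Section LinOn.
Variables (D : V -> Prop) (f : V -> CC).
Hypotheses (D0 : D 0) (f_lin : lin_on D f).

Lemma lin_on0 : f 0 = 0.
Proof.
have := f_lin 1 D0 D0; rewrite scale1r addr0 mul1r => f00.
by apply: (@addrI _ (f 0)); rewrite addr0 -f00.
Qed.

Lemma lin_onD x y : D x -> D y -> f (x + y) = f x + f y.
Proof. by move=> Dx Dy; have := f_lin 1 Dx Dy; rewrite scale1r mul1r. Qed.

Lemma lin_onZ a x : D x -> f (a *: x) = a * f x.
Proof. by move=> Dx; rewrite -[a *: x]addr0 f_lin // lin_on0 addr0. Qed.

End LinOn.

Lemma addv_pi1_eq0 (P U : {vspace V}) v : v \in U -> addv_pi1 P U v = 0.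
Proof.
move=> vU; have /addv_pi1_pi2 : v \in (P + U)%VS by apply: subvP (addvSr P U) _ vU.
by rewrite addv_pi2_id // => /(canRL (addrK v)); rewrite subrr.
Qed.

(* The witness is phi after addv_pi1 P U, the projection onto a complement of
   P :&: U in P along U; on P it differs from the identity by a vector of
   P :&: U, which phi kills. *)
Lemma linear_ext_vanishing (P U : {vspace V}) (phi : V -> CC) :
  lin_on (fun x => x \in P) phi ->
  (forall v, v \in U -> v \in P -> phi v = 0) ->
  exists f : V -> CC,
    [/\ lin_on (fun=> True) f,
        forall v, v \in U -> f v = 0 &
        forall v, v \in P -> f v = phi v].
Proof.
move=> phi_lin phiU.
exists (fun v => phi (addv_pi1 P U v)); split.
- by move=> a x y _ _; rewrite linearP phi_lin ?memv_pi1.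
- by move=> v vU; rewrite addv_pi1_eq0 // (lin_on0 (mem0v P) phi_lin).
move=> v vP; have /addv_pi1_pi2 split_v : v \in (P + U)%VS.
  by apply: subvP (addvSl P U) _ vP.
have pi2P : addv_pi2 P U v \in P.
  have -> : addv_pi2 P U v = v - addv_pi1 P U v by rewrite -{2}split_v addrAC subrr add0r.
  by rewrite memvB ?memv_pi1.
have := congr1 phi split_v; rewrite (lin_onD phi_lin (memv_pi1 P U v) pi2P).
by rewrite (phiU _ (memv_pi2 P U v) pi2P) addr0.
Qed.

End LinearAlgebra.

Section LieAlgebra.
Variables (V : vectType CC) (br : V -> V -> V).

Lemma in_bracket_subspace (A B : V -> Prop) : subspace_pred (in_bracket br A B).
Proof.
split; first by exists [::]; rewrite big_nil.
move=> a _ _ [s [sAB ->]] [s' [s'AB ->]].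
exists ([seq (a * t.1.1, t.1.2, t.2) | t <- s] ++ s'); split.
  move=> t; rewrite mem_cat => /orP [/mapP [u us ->] | ]; last exact: s'AB.
  exact: sAB us.
rewrite big_cat big_map scaler_sumr; congr (_ + _).
by apply: eq_bigr => t _; rewrite scalerA.
Qed.

Lemma in_bracket_br (A B : V -> Prop) x y :
  A x -> B y -> in_bracket br A B (br x y).
Proof.
move=> Ax By; exists [:: (1, x, y)]; rewrite big_seq1 scale1r; split=> // t.
by rewrite inE => /eqP ->.
Qed.

Lemma lie_hom_on_in_bracket (D : V -> Prop) (f : V -> CC) :
  subspace_pred D -> (forall x y, D x -> D y -> D (br x y)) ->
  lie_hom_on br D f -> forall v, in_bracket br D D v -> f v = 0.
Proof.
move=> [D0 D_lin] D_br [f_lin f_br] _ [s [sD ->]].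
suff [] : D (\sum_(t <- s) t.1.1 *: br t.1.2 t.2) /\
          f (\sum_(t <- s) t.1.1 *: br t.1.2 t.2) = 0 by [].
elim: s sD => [|t s IH] sD; first by rewrite big_nil (lin_on0 D0 f_lin).
have [Dx Dy] := sD t (mem_head t s).
have [Ds fs] := IH (fun u us => sD u (mem_behead (s := t :: s) us)).
have Dxy := D_br _ _ Dx Dy.
by rewrite big_cons f_lin // f_br // fs mulr0 addr0; split; [apply: D_lin|].
Qed.

Hypothesis hL : lie_algebra br.

Lemma brDl x y z : br (x + y) z = br x z + br y z.
Proof. by case: hL => brl _ _ _; have := brl 1 x y z; rewrite !scale1r. Qed.

Lemma brDr x y z : br z (x + y) = br z x + br z y.
Proof. by case: hL => _ brr _ _; have := brr 1 x y z; rewrite !scale1r. Qed.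

Lemma br0l z : br 0 z = 0.
Proof. by apply: (@addrI _ (br 0 z)); rewrite -brDl !addr0. Qed.

Lemma br_anti x y : br y x = - br x y.
Proof.
case: hL => _ _ brxx _; apply/eqP; rewrite -addr_eq0 addrC; apply/eqP.
by have := brxx (x + y); rewrite brDl !brDr !brxx add0r addr0.
Qed.

Lemma is_ideal_brl (I : {vspace V}) g x : is_ideal br I -> x \in I -> br x g \in I.
Proof. by move=> hI xI; rewrite br_anti memvN hI. Qed.

Section Whittaker.
Variables (P : {vspace V}) (phi : V -> CC).
Hypotheses (hI : is_ideal br P) (phi_lin : lin_on (fun x => x \in P) phi).

Local Notation W := (whittaker_ann br P phi).

Lemma whittaker_ann_subspace : subspace_pred W.
Proof.
split=> [p _ | a x y Wx Wy p pP]; first by rewrite br0l (lin_on0 (mem0v P) phi_lin).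
by case: hL => brl _ _ _; rewrite brl phi_lin ?hI // Wx // Wy // mulr0 addr0.
Qed.

Lemma whittaker_ann_br x y : W x -> W y -> W (br x y).
Proof.
move=> Wx Wy p pP; case: hL => _ _ _ /(_ x y p) jacobi.
have Pyp : br y p \in P by apply: hI.
have Ppx : br p x \in P by apply: is_ideal_brl.
have Ppxy : br p (br x y) \in P by apply: is_ideal_brl.
have phiD := lin_onD phi_lin; have phiZ := lin_onZ (mem0v P) phi_lin.
have := congr1 phi jacobi; rewrite (lin_on0 (mem0v P) phi_lin).
have [Pxyp Pypx] := (hI x Pyp, hI y Ppx).
rewrite (phiD _ _ (memvD Pxyp Pypx) Ppxy) (phiD _ _ Pxyp Pypx).
rewrite Wx // Wy // !add0r => phi_pxy.
by rewrite br_anti -scaleN1r phiZ // phi_pxy mulr0.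
Qed.

End Whittaker.
End LieAlgebra.

Theorem proposition3p5 (V : vectType CC) (br : V -> V -> V)
  (P : {vspace V}) (phi : V -> CC) :
  lie_algebra br ->
  ~ semisimple br ->
  is_ideal br P ->
  ~ perfect br P ->
  lie_hom_on br (fun x => x \in P) phi ->
  (extendable br P phi <->
   (forall v, in_bracket br (whittaker_ann br P phi) (whittaker_ann br P phi) v ->
              v \in P -> phi v = 0)).
Proof.
move=> hL _ hI _ [phi_lin _]; split.
- move=> [f [f_hom f_ext]] v Kv vP; rewrite -f_ext //.
  apply: (lie_hom_on_in_bracket (whittaker_ann_subspace hL hI phi_lin)) Kv => //.
  exact: whittaker_ann_br.
- move=> phiK.
  have [U memU] := vspace_of_pred (in_bracket_subspace br
    (whittaker_ann br P phi) (whittaker_ann br P phi)).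
  have [f [f_lin fU fP]] := linear_ext_vanishing phi_lin
    (fun v vU => phiK v ((memU v).1 vU)).
  exists f; split=> //; split=> [a x y _ _ | x y Wx Wy]; first exact: f_lin.
  by apply/fU/memU/in_bracket_br.
Qed.
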